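(* Let $\mathbb{K}$ be a field, $S=\mathbb{K}[x_1,\ldots,x_n]$, and let $I\subseteq S$ be a support-$2$ monomial ideal which is a Simis ideal and whose irreducible decomposition is minimal. Assume that $\alpha_{i,j}=1$ for every edge $\{x_i,x_j\}$ of $G(I)$. Then there exist a Simis square-free monomial ideal $J\subseteq S$ and a standard linear weighting $w$ of $S$ such that $I=J_w$.
   Context: For a monomial ideal $I$, $\mathcal{G}(I)$ denotes its minimal set of monomial generators. $I$ is a support-$2$ monomial ideal if $\mathcal{G}(I)\subseteq\{x_i^ax_j^b : 1\le i<j\le n,\ a,b\ge 1\}$. The underlying simple graph $G(I)$ has vertices $x_1,\ldots,x_n$ and an edge $\{x_i,x_j\}$ whenever some element of $\mathcal{G}(I)$ has support $\{x_i,x_j\}$. For an edge $\{x_i,x_j\}$, $\alpha_{i,j}$ is the number of elements of $\mathcal{G}(I)$ whose support is exactly $\{x_i,x_j\}$. Symbolic power: $I^{(s)}=\bigcap_{P\in\mathrm{MinAss}(I)}(I^sS_P\cap S)$ over the minimal primes of $I$; $I$ is Simis if $I^{(s)}=I^s$ for all $s\ge 1$. Irreducible monomial ideals are those generated by pure powers of variables; every monomial ideal has a unique irredundant decomposition $I=\bigcap Q_i$ into irreducible monomial ideals, called minimal if $\sqrt{Q_i}\ne\sqrt{Q_j}$ for $i\neq j$. A standard linear weighting is $w(a_1,\ldots,a_n)=(d_1a_1,\ldots,d_na_n)$ with fixed positive integers $d_i$, and for a monomial ideal $J$, $J_w$ is generated by the monomials obtained from $\mathcal{G}(J)$ by replacing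 each $x_i$ by $x_i^{d_i}$. *)

From HB Require Import structures.
From mathcomp Require Import all_boot all_order all_algebra.
From mathcomp Require Import mpoly.
Set Implicit Arguments. Unset Strict Implicit. Unset Printing Implicit Defensive.
Import GRing.Theory.
Local Open Scope ring_scope.

Section MonIdeals.
Variables (K : fieldType) (n : nat).
Local Notation S := {mpoly K[n]}.

Definition is_ideal (I : S -> Prop) : Prop :=
  I 0 /\ (forall f g, I f -> I g -> I (f + g)) /\ (forall f g, I g -> I (f * g)).

Definition ideal_gen (G : S -> Prop) : S -> Prop :=
  fun f => forall J, is_ideal J -> (forall g, G g -> J g) -> J f.

Definition same_ideal (I J : S -> Prop) : Prop := forall f, I f <-> J f.
Definition sub_ideal (I J : S -> Prop) : Prop := forall f, I f -> J f.

Definition mon_ideal (M : 'X_{1..n} -> Prop) : S -> Prop :=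
  ideal_gen (fun g => exists m, M m /\ g = 'X_[m]).

Definition is_monomial_ideal (I : S -> Prop) : Prop :=
  is_ideal I /\ exists M, same_ideal I (mon_ideal M).

(* m is in the minimal monomial generating set G(I): a monomial of I
   minimal for divisibility among monomials of I *)
Definition mingen (I : S -> Prop) (m : 'X_{1..n}) : Prop :=
  I 'X_[m] /\ forall m', I 'X_[m'] -> (forall i, m' i <= m i)%N -> m' = m.

Definition support2 (I : S -> Prop) : Prop :=
  is_monomial_ideal I /\
  forall m, mingen I m ->
    exists i j : 'I_n, [/\ (i < j)%N, (0 < m i)%N, (0 < m j)%N &
                          forall k, k != i -> k != j -> m k = 0%N].

(* alpha_{i,j} = 1 for every edge: two minimal generators with the same
   support coincide *)
Definition alpha_one (I : S -> Prop) : Prop :=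
  forall m1 m2, mingen I m1 -> mingen I m2 ->
    (forall k, (0 < m1 k)%N = (0 < m2 k)%N) -> m1 = m2.

Definition squarefree_monomial_ideal (J : S -> Prop) : Prop :=
  is_monomial_ideal J /\ forall m, mingen J m -> forall i, (m i <= 1)%N.

Definition ideal_pow (s : nat) (I : S -> Prop) : S -> Prop :=
  ideal_gen (fun f => exists fs : seq S,
     [/\ size fs = s, (forall g, g \in fs -> I g) & f = \prod_(g <- fs) g]).

Definition prime_ideal (P : S -> Prop) : Prop :=
  is_ideal P /\ ~ P 1 /\ forall f g, P (f * g) -> P f \/ P g.

Definition min_prime (I P : S -> Prop) : Prop :=
  prime_ideal P /\ sub_ideal I P /\
  forall Q, prime_ideal Q -> sub_ideal I Q -> sub_ideal Q P -> sub_ideal P Q.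

(* I S_P \cap S = { f | exists u not in P, u f in I } *)
Definition loc_contr (I P : S -> Prop) : S -> Prop :=
  fun f => exists u, ~ P u /\ I (u * f).

Definition symbolic_power (s : nat) (I : S -> Prop) : S -> Prop :=
  fun f => forall P, min_prime I P -> loc_contr (ideal_pow s I) P f.

Definition simis (I : S -> Prop) : Prop :=
  forall s, (1 <= s)%N -> same_ideal (symbolic_power s I) (ideal_pow s I).

Definition radical (I : S -> Prop) : S -> Prop := fun f => exists k, I (f ^+ k).

Definition irred_mon (A : {set 'I_n}) (e : 'I_n -> nat) : S -> Prop :=
  ideal_gen (fun g => exists2 i, i \in A & g = 'X_i ^+ (e i)).

(* I has an irredundant irreducible decomposition I = \cap_{l<k} Q_l
   whose components have pairwise distinct radicals *)
Definition minimal_irred_decomp (I : S -> Prop) : Prop :=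
  exists (k : nat) (A : 'I_k -> {set 'I_n}) (e : 'I_k -> 'I_n -> nat),
    [/\ forall l i, i \in A l -> (1 <= e l i)%N,
        same_ideal I (fun f => forall l, irred_mon (A l) (e l) f),
        forall l, ~ same_ideal I
                   (fun f => forall l', l' != l -> irred_mon (A l') (e l') f) &
        forall l l', l != l' ->
          ~ same_ideal (radical (irred_mon (A l) (e l)))
                       (radical (irred_mon (A l') (e l')))].

Definition weighted (d : 'I_n -> nat) (J : S -> Prop) : S -> Prop :=
  mon_ideal (fun m' => exists m, mingen J m /\ m' = [multinom (d i * m i)%N | i < n]).

End MonIdeals.

(* Write each minimal generator of I as x_i^a x_j^b.  The heart of the proof is that the
   exponent of x_i is the same in all generators containing it.  Suppose g = x_i^a x_j^b and
   g' = x_i^a' x_k^c with a < a'.  The minimal primes of I are generated by variables, and the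
   primary component of each contains pure powers whose exponents are bounded by those of the
   generators; hence w = g g' / x_i lies in the symbolic square I^(2) = I^2.  Since alpha = 1, the
   only way w can be divisible by a product of two generators is through the square of a
   generator h on {x_j, x_k} with 2 h_j <= b.  Repeating the argument with h and g at x_j yields
   the square of a generator on {x_k, x_i}, which must be g', and 2 a' <= a is absurd.
   With d_i the common exponent of x_i, I = J_w for the square-free ideal J generated by the
   supports of the generators, and the substitution x_i |-> x_i^(d_i) moves elements of the
   symbolic powers of J into those of I = J_w and brings I^s back into J^s. *)

From HB Require Import structures.
From mathcomp Require Import all_boot all_order all_algebra.
From mathcomp Require Import mpoly.
From mathcomp Require Import zify.
From mathcomp Require Import boolp.
Set Implicit Arguments. Unset Strict Implicit. Unset Printing Implicit Defensive.
Import GRing.Theory.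
Local Open Scope ring_scope.

Section MonomialIdeals.
Variables (K : fieldType) (n : nat).
Local Notation S := {mpoly K[n]}.
Local Notation mon := 'X_{1..n}.
Local Notation mon_ideal := (@mon_ideal K n).
Implicit Types (I J P : S -> Prop) (G : S -> Prop) (M : mon -> Prop).
Implicit Types (f g u : S) (m a b : mon) (C A : {set 'I_n}) (e : 'I_n -> nat).

Lemma ideal_gen_is_ideal G : is_ideal (ideal_gen G).
Proof.
split; [|split].
- by move=> J [J0 _] _.
- move=> f g Gf Gg J IJ GJ; case: (IJ) => _ [JD _].
  by apply: JD; [exact: Gf | exact: Gg].
- move=> f g Gg J IJ GJ; case: (IJ) => _ [_ JM].
  by apply: JM; exact: Gg.
Qed.

Lemma ideal_gen_in G g : G g -> ideal_gen G g.
Proof. by move=> Gg J _; apply. Qed.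

Lemma ideal_gen_min G J :
  is_ideal J -> (forall g, G g -> J g) -> sub_ideal (ideal_gen G) J.
Proof. by move=> IJ GJ f; apply. Qed.

Lemma eq_ideal_gen G G' :
  (forall g, G g <-> G' g) -> same_ideal (ideal_gen G) (ideal_gen G').
Proof. by move=> E f; split=> Gf J IJ GJ; apply: Gf => // g /E; apply: GJ. Qed.

Section IdealClosure.
Variable J : S -> Prop.
Hypothesis IJ : is_ideal J.

Lemma ideal0 : J 0.
Proof. by case: IJ. Qed.

Lemma idealD f g : J f -> J g -> J (f + g).
Proof. by case: IJ => _ [+ _]; apply. Qed.

Lemma idealMl f g : J g -> J (f * g).
Proof. by case: IJ => _ [_]; apply. Qed.

Lemma idealZ c f : J f -> J (c *: f).
Proof. by rewrite -mul_mpolyC; apply: idealMl. Qed.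

Lemma ideal_sum (T : eqType) (r : seq T) (F : T -> S) :
  (forall x, x \in r -> J (F x)) -> J (\sum_(x <- r) F x).
Proof.
elim: r => [|x r IHr] Fr; first by rewrite big_nil; apply: ideal0.
rewrite big_cons; apply: idealD; first by apply: Fr; rewrite mem_head.
by apply: IHr => y yr; apply: Fr; rewrite inE yr orbT.
Qed.

End IdealClosure.

Lemma mon_ideal_is_ideal M : is_ideal (mon_ideal M).
Proof. exact: ideal_gen_is_ideal. Qed.

Lemma mon_ideal_gen M a : M a -> mon_ideal M 'X_[a].
Proof. by move=> Ma; apply: ideal_gen_in; exists a. Qed.

Lemma mon_ideal_min M J :
  is_ideal J -> (forall a, M a -> J 'X_[a]) -> sub_ideal (mon_ideal M) J.
Proof. by move=> IJ MJ; apply: ideal_gen_min => // g [a [Ma ->]]; apply: MJ. Qed.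

Lemma mon_ideal_monomial M : is_monomial_ideal (mon_ideal M).
Proof. by split; [exact: mon_ideal_is_ideal | exists M]. Qed.

Lemma mon_idealP M f :
  mon_ideal M f <-> {in msupp f, forall m, exists2 a, M a & (a <= m)%MM}.
Proof.
split=> [Mf|Mf].
- apply: (Mf (fun f => {in msupp f, forall m, exists2 a, M a & (a <= m)%MM})).
  split; [|split].
  + by move=> m; rewrite -mpolyC0 msupp0.
  + move=> p q Mp Mq m /msuppD_le; rewrite mem_cat => /orP[/Mp | /Mq] //.
  + move=> p q Mq m /msuppM_le /allpairsP [[m1 m2] /= [_ /Mq [a Ma am2] ->]].
    by exists a => //; apply: lepm_trans am2 (lem_addl _ _).
  + move=> _ [a [Ma ->]] m; rewrite msuppX inE => /eqP ->.
    by exists a; rewrite ?lepm_refl.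
- rewrite [f]mpolyE; apply: (ideal_sum (mon_ideal_is_ideal M)) => m /Mf [a Ma am].
  apply: (idealZ (mon_ideal_is_ideal M)).
  rewrite -(submK am) mpolyXD; apply: (idealMl (mon_ideal_is_ideal M)).
  exact: mon_ideal_gen.
Qed.

Lemma mon_idealX M m : mon_ideal M 'X_[m] <-> exists2 a, M a & (a <= m)%MM.
Proof.
rewrite mon_idealP msuppX; split=> [|Mm m']; first by apply; rewrite mem_head.
by rewrite inE => /eqP ->.
Qed.

Lemma mon_ideal_mono M M' :
  (forall a, M a -> exists2 b, M' b & (b <= a)%MM) ->
  sub_ideal (mon_ideal M) (mon_ideal M').
Proof.
by move=> MM'; apply: mon_ideal_min (mon_ideal_is_ideal _) _ => a /MM' /mon_idealX.
Qed.

Lemma eq_mon_ideal M M' :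
  (forall a, M a <-> M' a) -> same_ideal (mon_ideal M) (mon_ideal M').
Proof. by move=> E; apply: eq_ideal_gen => g; split=> -[a [/E Ma ->]]; exists a. Qed.

Lemma lepmD m1 m2 m1' m2' :
  (m1 <= m1')%MM -> (m2 <= m2')%MM -> (m1 + m2 <= m1' + m2')%MM.
Proof.
by move=> /mnm_lepP le1 /mnm_lepP le2; apply/mnm_lepP => t; rewrite !mnmDE leq_add.
Qed.

Definition msum_of M M' m := exists a b, [/\ M a, M' b & m = (a + b)%MM].

Lemma mon_idealM M M' f g :
  mon_ideal M f -> mon_ideal M' g -> mon_ideal (msum_of M M') (f * g).
Proof.
rewrite !mon_idealP => Mf Mg m
  /msuppM_le /allpairsP [[m1 m2] /= [/Mf[a Ma am1] /Mg[b Mb bm2] ->]].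
by exists (a + b)%MM; [exists a, b | apply: lepmD].
Qed.

Lemma mingen_below I m : I 'X_[m] -> exists2 g, mingen I g & (g <= m)%MM.
Proof.
elim: {m}(mdeg m).+1 {-2}m (ltnSn (mdeg m)) => [//|N IHN] m ltmN Im.
have [mgm|not_mgm] := EM (mingen I m); first by exists m; rewrite ?lepm_refl.
have [m' [Im' m'm ne]] : exists m', [/\ I 'X_[m'], (m' <= m)%MM & m' <> m].
  apply: contrapT => none; apply: not_mgm; split=> // m' Im' m'm.
  apply: contrapT => ne; apply: none; exists m'; split=> //; exact/mnm_lepP.
have lt_deg : (mdeg m' < mdeg m)%N.
  rewrite -(submK m'm) mdegD -[X in (X < _)%N]add0n ltn_add2r lt0n mdeg_eq0.
  by apply: contra_notN ne => /eqP m'0; rewrite -(submK m'm) m'0 add0m.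
have [g mgg gm'] := IHN m' (leq_trans lt_deg (ltnSE ltmN)) Im'.
by exists g => //; apply: lepm_trans gm' m'm.
Qed.

Lemma monomial_ideal_mingen I :
  is_monomial_ideal I -> same_ideal I (mon_ideal (mingen I)).
Proof.
move=> [II [M EM]] f; split.
- move=> /EM; apply: mon_ideal_mono => a Ma.
  by apply: mingen_below; apply/EM; apply: mon_ideal_gen.
- by apply: mon_ideal_min => // a [].
Qed.

Definition sum_of s M a := exists l : seq mon,
  [/\ size l = s, {in l, forall x, M x} & a = \big[+%MM/0%MM]_(x <- l) x].

Lemma eq_ideal_pow s I J : same_ideal I J -> same_ideal (ideal_pow s I) (ideal_pow s J).
Proof.
move=> E; apply: eq_ideal_gen => f.
by split=> -[fs [sz Ifs ->]]; exists fs; split=> // g /Ifs /E.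
Qed.

Lemma ideal_pow_is_ideal s I : is_ideal (ideal_pow s I).
Proof. exact: ideal_gen_is_ideal. Qed.

Lemma ideal_pow_monX s M a : sum_of s M a -> ideal_pow s (mon_ideal M) 'X_[a].
Proof.
case=> l [<- Ml ->]; apply: ideal_gen_in; exists [seq 'X_[x] | x <- l].
split; [by rewrite size_map | | by rewrite big_map -mpolyX_prod].
by move=> _ /mapP [x xl ->]; apply: mon_ideal_gen; apply: Ml.
Qed.

Lemma ideal_pow_mon_ideal s M :
  same_ideal (ideal_pow s (mon_ideal M)) (mon_ideal (sum_of s M)).
Proof.
move=> f; split; last first.
  apply: mon_ideal_min; [exact: ideal_pow_is_ideal | exact: ideal_pow_monX].
apply: ideal_gen_min; first exact: mon_ideal_is_ideal.
move=> _ [fs [<- Mfs ->]]; elim: fs Mfs => [|g fs IHfs] Mfs.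
  by rewrite big_nil -mpolyX0; apply: mon_ideal_gen; exists [::]; rewrite big_nil.
rewrite big_cons; have Mg : mon_ideal M g by apply: Mfs; rewrite mem_head.
have Mfs' : mon_ideal (sum_of (size fs) M) (\prod_(h <- fs) h).
  by apply: IHfs => h hfs; apply: Mfs; rewrite inE hfs orbT.
apply: mon_ideal_mono (mon_idealM Mg Mfs') => _ [a [b [Ma [l [sl Ml ->]] ->]]].
exists (a + \big[+%MM/0%MM]_(x <- l) x)%MM; last exact: lepm_refl.
exists (a :: l); split; [by rewrite /= sl | | by rewrite big_cons].
by move=> x; rewrite inE => /predU1P [-> | /Ml].
Qed.

Lemma ideal_pow2 I f g : I f -> I g -> ideal_pow 2 I (f * g).
Proof.
move=> If Ig; apply: ideal_gen_in; exists [:: f; g].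
split=> //; last by rewrite !big_cons big_nil mulr1.
by move=> h; rewrite !inE => /orP[] /eqP ->.
Qed.

Lemma ideal_pow_symbolic_power s I f : ideal_pow s I f -> symbolic_power s I f.
Proof. by move=> If P [[_ [not_P1 _]] _]; exists 1; rewrite mul1r. Qed.

Definition pure_pow_ideal A e :=
  mon_ideal (fun a => exists2 i, i \in A & a = (U_(i) *+ e i)%MM).

Lemma irred_mon_pure_pow A e : same_ideal (irred_mon A e) (pure_pow_ideal A e).
Proof.
apply: eq_ideal_gen => g; split.
- by case=> i iA ->; exists (U_(i) *+ e i)%MM; rewrite -?mpolyXn; split=> //; exists i.
- by case=> _ [[i iA ->] ->]; exists i; rewrite -?mpolyXn.
Qed.

Lemma mulmn1E (i t : 'I_n) k : ((U_(i) *+ k)%MM t = (i == t) * k)%N.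
Proof. by rewrite mulmnE mnm1E. Qed.

Lemma pure_pow_idealX A e m :
  pure_pow_ideal A e 'X_[m] <-> exists2 i, i \in A & (e i <= m i)%N.
Proof.
rewrite /pure_pow_ideal mon_idealX; split.
- by case=> _ [i iA ->] /mnm_lepP /(_ i); rewrite mulmn1E eqxx mul1n; exists i.
- case=> i iA le; exists (U_(i) *+ e i)%MM; first by exists i.
  by apply/mnm_lepP => t; rewrite mulmn1E; case: eqP => [<-|]; rewrite ?mul1n ?mul0n.
Qed.

Definition var_ideal C := pure_pow_ideal C (fun=> 1%N).

Definition meets C m := [exists i in C, 0 < m i]%N.

Lemma meetsP C m : reflect (exists2 i, i \in C & (0 < m i)%N) (meets C m).
Proof. exact: exists_inP. Qed.

Lemma var_idealX C m : var_ideal C 'X_[m] <-> meets C m.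
Proof. by rewrite /var_ideal pure_pow_idealX; split=> /meetsP. Qed.

Lemma var_idealU C i : var_ideal C 'X_i <-> i \in C.
Proof.
rewrite var_idealX; split=> [/meetsP [j jC] | iC].
  by rewrite mnm1E lt0b => /eqP ->.
by apply/meetsP; exists i; rewrite ?mnm1E ?eqxx.
Qed.

Lemma var_idealP C f : var_ideal C f <-> all (meets C) (msupp f).
Proof.
rewrite /var_ideal /pure_pow_ideal mon_idealP.
split=> [Cf | /allP Cf m /Cf /var_idealX /mon_idealX //].
by apply/allP => m /Cf /mon_idealX /var_idealX.
Qed.

Lemma var_ideal_mono C C' : C' \subset C -> sub_ideal (var_ideal C') (var_ideal C).
Proof.
move=> sC'C f; rewrite !var_idealP => /allP C'f; apply/allP => m /C'f /meetsP [i iC' mi].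
by apply/meetsP; exists i => //; apply: (subsetP sC'C).
Qed.

Lemma var_ideal_min C J :
  is_ideal J -> (forall i, i \in C -> J 'X_i) -> sub_ideal (var_ideal C) J.
Proof. by move=> IJ CJ; apply: mon_ideal_min => // _ [i iC ->]; apply: CJ. Qed.

(* var_ideal C is prime because it is the kernel of the morphism killing the variables of C. *)
Definition kill_vars C : n.-tuple S := [tuple if i \in C then 0 else 'X_i | i < n].

Lemma kill_varsX C m : 'X_[m] \mPo kill_vars C = if meets C m then 0 else 'X_[m].
Proof.
rewrite comp_mpolyX; case: (meetsP C m) => [[i iC mi] | not_meets].
  by rewrite (bigD1 i) //= tnth_mktuple iC expr0n -[(m i == 0)%N]negbK -lt0n mi mul0r.
rewrite [RHS]mpolyXE_id; apply: eq_bigr => i _; rewrite tnth_mktuple.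
case: ifP => // iC; suff -> : m i = 0%N by rewrite !expr0.
by apply/eqP; rewrite -leqn0 leqNgt; apply/negP => mi; apply: not_meets; exists i.
Qed.

Lemma kill_vars_eq0 C f : (f \mPo kill_vars C == 0) = all (meets C) (msupp f).
Proof.
have -> : f \mPo kill_vars C = \sum_(m <- [seq m <- msupp f | ~~ meets C m]) f@_m *: 'X_[m].
  rewrite comp_mpolyEX big_filter [RHS]big_mkcond /=; apply: eq_bigr => m _.
  by rewrite kill_varsX; case: meets; rewrite ?scaler0.
have [|/allPn [m mf not_meets]] := boolP (all _ _).
  move/allP => Cf; rewrite big_seq big1 ?eqxx // => m.
  by rewrite mem_filter => /andP[/negP + /Cf].
apply/negbTE/eqP => sum0.
have nz : {in [seq m <- msupp f | ~~ meets C m], forall m, f@_m != 0}.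
  by move=> m'; rewrite mem_filter -mcoeff_msupp => /andP[].
have := perm_mem (msupp_sumX (filter_uniq _ (msupp_uniq f)) nz) m.
by rewrite sum0 -mpolyC0 msupp0 mem_filter not_meets mf in_nil.
Qed.

Lemma var_ideal_prime C : prime_ideal (var_ideal C).
Proof.
split; first exact: mon_ideal_is_ideal.
split; first by rewrite -mpolyX0 var_idealX => /meetsP [i _]; rewrite mnm0E.
by move=> f g; rewrite !var_idealP -!kill_vars_eq0 rmorphM mulf_eq0 => /orP[]; [left|right].
Qed.

Lemma prime_ideal_prod P (T : eqType) (r : seq T) (F : T -> S) :
  prime_ideal P -> P (\prod_(x <- r) F x) -> exists2 x, x \in r & P (F x).
Proof.
move=> [_ [not_P1 PM]]; elim: r => [|x r IHr]; first by rewrite big_nil.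
rewrite big_cons => /PM [Px | /IHr [y yr Py]]; first by exists x; rewrite ?mem_head.
by exists y; rewrite // inE yr orbT.
Qed.

Lemma prime_ideal_exp P f k : prime_ideal P -> P (f ^+ k) -> (0 < k)%N /\ P f.
Proof.
move=> [_ [not_P1 PM]]; elim: k => [|k IHk]; first by rewrite expr0.
by rewrite exprS => /PM [Pf | /IHk []].
Qed.

Lemma prime_idealX P m : prime_ideal P -> P 'X_[m] -> exists2 i, (0 < m i)%N & P 'X_i.
Proof.
move=> primeP; rewrite mpolyXE_id => /(prime_ideal_prod primeP) [i _].
by move=> /(prime_ideal_exp primeP) []; exists i.
Qed.

Definition vertex_cover I C := forall m, mingen I m -> meets C m.

Definition min_vertex_cover I C :=
  vertex_cover I C /\ forall C', C' \subset C -> vertex_cover I C' -> C \subset C'.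

Lemma vertex_cover_sub I C :
  is_monomial_ideal I -> vertex_cover I C -> sub_ideal I (var_ideal C).
Proof.
move=> monI coverC f /(monomial_ideal_mingen monI).
by apply: mon_ideal_min; [exact: mon_ideal_is_ideal | move=> a /coverC /var_idealX].
Qed.

Lemma min_prime_var_ideal I P :
  is_monomial_ideal I -> min_prime I P ->
  exists C, same_ideal P (var_ideal C) /\ min_vertex_cover I C.
Proof.
move=> monI [primeP [IP minP]].
pose C := [set i | `[< P 'X_i >]].
have inC i : i \in C <-> P 'X_i by rewrite inE; split=> /asboolP.
have coverC : vertex_cover I C.
  move=> g [/IP /(prime_idealX primeP) [i gi /inC iC] _].
  by apply/meetsP; exists i.
have CP : sub_ideal (var_ideal C) P.
  by apply: var_ideal_min => [|i /inC //]; case: primeP.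
have PC : same_ideal P (var_ideal C).
  move=> f; split; last exact: CP.
  exact: minP (var_ideal_prime C) (vertex_cover_sub monI coverC) CP f.
exists C; split=> //; split=> // C' C'C coverC'.
have := minP _ (var_ideal_prime C') (vertex_cover_sub monI coverC').
move=> /(_ (fun f C'f => CP f (var_ideal_mono C'C C'f))) PC'.
by apply/subsetP => i /inC /PC' /var_idealU.
Qed.

Lemma min_vertex_cover_min_prime I C :
  is_monomial_ideal I -> min_vertex_cover I C -> min_prime I (var_ideal C).
Proof.
move=> monI [coverC minC]; split; first exact: var_ideal_prime.
split; first exact: vertex_cover_sub.
move=> Q primeQ IQ QC; apply: var_ideal_min => [|i iC]; first by case: primeQ.
have [g mgg not_meets] : exists2 m, mingen I m & ~ meets (C :\ i) m.
  apply: contrapT => all_meet; have /subsetP /(_ i iC) : C \subset C :\ i.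
    apply: minC (subsetDl C [set i]) _ => m mgm.
    by apply: contrapT => nm; apply: all_meet; exists m.
  by rewrite !inE eqxx.
have [mgX _] := mgg; have [j gj Qj] := prime_idealX primeQ (IQ _ mgX).
have /var_idealU jC := QC _ Qj.
have [<- // | ji] := eqVneq j i.
by case: not_meets; apply/meetsP; exists j; rewrite // !inE ji.
Qed.

Definition deg_on A m := (\sum_(i in A) m i)%N.

Lemma deg_onD A m1 m2 : deg_on A (m1 + m2)%MM = (deg_on A m1 + deg_on A m2)%N.
Proof. by rewrite /deg_on -big_split; apply: eq_bigr => i _; rewrite mnmDE. Qed.

Lemma deg_on_exp A f N :
  mon_ideal (fun m => 1 <= deg_on A m)%N f ->
  mon_ideal (fun m => N <= deg_on A m)%N (f ^+ N).
Proof.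
move=> Af; elim: N => [|N IHN]; first by rewrite expr0 -mpolyX0; apply: mon_ideal_gen.
rewrite exprS; apply: mon_ideal_mono (mon_idealM Af IHN) => _ [a [b [Aa Nb ->]]].
by exists (a + b)%MM; rewrite ?lepm_refl // deg_onD -add1n leq_add.
Qed.

(* If f^k lies in (x_i^(e i) : i in A), every monomial of f^k has A-degree >= 1, so those
   of f^(k N) have A-degree >= N, which forces x_i^(e' i) for some i once N > sum e'. *)
Lemma radical_irred_mon_sub A e e' :
  (forall i, i \in A -> 1 <= e i)%N ->
  sub_ideal (radical (irred_mon (K:=K) A e)) (radical (irred_mon A e')).
Proof.
move=> e_pos f [k /irred_mon_pure_pow Aek].
have A1 : mon_ideal (fun m => 1 <= deg_on A m)%N (f ^+ k).
  apply: mon_ideal_mono Aek => _ [i iA ->]; exists (U_(i) *+ e i)%MM; last exact: lepm_refl.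
  rewrite /deg_on (bigD1 i) //= mulmn1E eqxx mul1n.
  exact: leq_trans (e_pos i iA) (leq_addr _ _).
pose N := (\sum_(i in A) e' i).+1.
exists (k * N)%N; rewrite exprM; apply/irred_mon_pure_pow.
apply: mon_ideal_min (deg_on_exp A1) => [|a Na]; first exact: mon_ideal_is_ideal.
apply/pure_pow_idealX; apply: contrapT => small.
move: Na; rewrite /N ltnNge => /negP; apply; apply: leq_sum => i iA.
by rewrite leqNgt; apply/negP => lt; apply: small; exists i => //; apply: ltnW.
Qed.

Lemma loc_contr_pow2X I C (p1 p2 w : mon) :
  I 'X_[p1] -> I 'X_[p2] -> (forall s, s \in C -> p1 s + p2 s <= w s)%N ->
  loc_contr (ideal_pow 2 I) (var_ideal C) 'X_[w].
Proof.
move=> Ip1 Ip2 le_w; exists 'X_[(p1 + p2 - w)%MM]; split.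
  move/var_idealX/meetsP => [s sC]; rewrite mnmBE mnmDE subn_gt0 ltnNge.
  by rewrite le_w.
have le : (p1 + p2 <= p1 + p2 - w + w)%MM.
  by apply/mnm_lepP => s; rewrite !(mnmDE, mnmBE); lia.
rewrite -mpolyXD -(submK le) !mpolyXD.
by apply: (idealMl (ideal_pow_is_ideal _ _)); apply: ideal_pow2.
Qed.

Definition antichain M := forall a b, M a -> M b -> (a <= b)%MM -> a = b.

Lemma mingen_antichain I : antichain (mingen I).
Proof. by move=> a b [Ia _] [_ minb] /mnm_lepP /(minb a Ia). Qed.

Lemma mingen_mon_ideal M m : antichain M -> mingen (mon_ideal M) m <-> M m.
Proof.
move=> antiM; split.
- case=> /mon_idealX [a Ma am] minm.
  by rewrite -(minm a (mon_ideal_gen Ma) (mnm_lepP am)).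
- move=> Mm; split=> [|m' /mon_idealX [a Ma am'] m'm]; first exact: mon_ideal_gen.
  have am := antiM _ _ Ma Mm (lepm_trans am' (introT mnm_lepP m'm)); subst a.
  by apply/mnmP => t; apply/eqP; rewrite eqn_leq m'm (mnm_lepP am' t).
Qed.

Lemma eq_simis I J : same_ideal I J -> simis I -> simis J.
Proof.
move=> IJ simI s s1 f; rewrite -(eq_ideal_pow s IJ f) -(simI s s1 f).
have eq_min P : min_prime I P <-> min_prime J P.
  rewrite /min_prime /sub_ideal; split=> -[pP [sub minP]]; split=> //; split.
  - by move=> g /IJ /sub.
  - by move=> Q pQ JQ; apply: minP => // g /IJ /JQ.
  - by move=> g /IJ /sub.
  - by move=> Q pQ IQ; apply: minP => // g /IJ /IQ.
by split=> symf P /eq_min /symf [u [Pu Iu]]; exists u;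
  split=> //; apply/(eq_ideal_pow s IJ).
Qed.

End MonomialIdeals.

Section PrimaryComponent.
Variables (K : fieldType) (n : nat).
Local Notation S := {mpoly K[n]}.
Local Notation mon := 'X_{1..n}.
Implicit Types (f : S) (m : mon) (C : {set 'I_n}).

Variables (I : S -> Prop) (k : nat) (A : 'I_k -> {set 'I_n}) (e : 'I_k -> 'I_n -> nat).
Hypothesis e_pos : forall l i, i \in A l -> (1 <= e l i)%N.
Hypothesis I_decomp : same_ideal I (fun f => forall l, irred_mon (A l) (e l) f).
Hypothesis radicals_distinct : forall l l', l != l' ->
  ~ same_ideal (radical (irred_mon (K:=K) (A l) (e l))) (radical (irred_mon (A l') (e l'))).

Lemma decompX m : I 'X_[m] <-> forall l, exists2 i, i \in A l & (e l i <= m i)%N.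
Proof.
rewrite I_decomp; split=> Im l; first exact/pure_pow_idealX/irred_mon_pure_pow.
exact/irred_mon_pure_pow/pure_pow_idealX.
Qed.

Lemma component_vertex_cover l : vertex_cover I (A l).
Proof.
move=> m [/decompX /(_ l) [i iA le] _]; apply/meetsP; exists i => //.
exact: leq_trans (e_pos iA) le.
Qed.

Let emax := (\max_(l < k) \max_(i < n) e l i)%N.

Lemma e_le_max l i : (e l i <= emax)%N.
Proof.
apply: leq_trans (leq_bigmax l).
exact: (leq_bigmax (F := fun i => e l i) i).
Qed.

(* A monomial with large exponents off C lies in every component not supported on C. *)
Definition off_cover C : mon := [multinom if i \in C then 0%N else emax | i < n].

Lemma off_cover_component C l m : min_vertex_cover I C -> A l != C ->
  (off_cover C <= m)%MM -> exists2 i, i \in A l & (e l i <= m i)%N.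
Proof.
move=> [_ minC] AlC /mnm_lepP offm.
have [i iA iC] : exists2 i, i \in A l & i \notin C.
  apply/subsetPn; apply: contra AlC => AlsubC.
  by rewrite eqEsubset AlsubC (minC _ AlsubC (component_vertex_cover l)).
by exists i => //; apply: leq_trans (offm i); rewrite mnmE (negbTE iC) e_le_max.
Qed.

Lemma component_on_min_cover C : min_vertex_cover I C -> exists l, A l = C.
Proof.
move=> minC; apply: contrapT => none.
have /mingen_below [m mgm /mnm_lepP moff] : I 'X_[off_cover C].
  apply/decompX => l; apply: off_cover_component (lepm_refl _) => //.
  by apply/eqP => AlC; apply: none; exists l.
have /meetsP [i iC mi] := minC.1 m mgm.
by move: (leq_trans mi (moff i)); rewrite mnmE iC.
Qed.

Lemma component_pure_powers C l : min_vertex_cover I C -> A l = C ->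
  forall t, t \in C ->
  exists v : mon, (forall s, s \in C -> v s = 0%N) /\ I 'X_[(v + U_(t) *+ e l t)%MM].
Proof.
move=> minC AlC t tC; exists (off_cover C); split=> [s sC|]; first by rewrite mnmE sC.
apply/decompX => l'; have [-> | l'l] := eqVneq l' l.
  by exists t; rewrite ?AlC // mnmDE mulmn1E eqxx mul1n leq_addl.
apply: off_cover_component (lem_addr _ _) => //; apply/eqP => Al'C.
apply: (radicals_distinct l'l) => f; rewrite Al'C -AlC.
split; apply: radical_irred_mon_sub => i; last exact: e_pos.
by rewrite AlC -Al'C; apply: e_pos.
Qed.

End PrimaryComponent.

Section Weighting.
Variables (K : fieldType) (n : nat) (d : 'I_n -> nat).
Hypothesis d_pos : forall i, (1 <= d i)%N.
Local Notation S := {mpoly K[n]}.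
Local Notation mon := 'X_{1..n}.
Local Notation mon_ideal := (@mon_ideal K n).
Implicit Types (I J : S -> Prop) (M : mon -> Prop) (f u : S) (m a b : mon) (C : {set 'I_n}).

Definition stretch m : mon := [multinom (d i * m i)%N | i < n].

Definition stretched M a := exists b, M b /\ a = stretch b.

Lemma weightedE J : weighted d J = mon_ideal (stretched (mingen J)).
Proof. by []. Qed.

Lemma lepm_stretch a b : (stretch a <= stretch b)%MM = (a <= b)%MM.
Proof.
apply/mnm_lepP/mnm_lepP => le t; last by rewrite !mnmE leq_mul2l le orbT.
by move: (le t); rewrite !mnmE leq_pmul2l.
Qed.

Lemma stretch_inj : injective stretch.
Proof.
move=> a b ab; apply/mnmP => t; apply/eqP; rewrite eqn_leq.
have /mnm_lepP -> : (a <= b)%MM by rewrite -lepm_stretch ab lepm_refl.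
by have /mnm_lepP -> : (b <= a)%MM by rewrite -lepm_stretch ab lepm_refl.
Qed.

Lemma meets_stretch C m : meets C (stretch m) = meets C m.
Proof. by apply: eq_existsb => t; rewrite mnmE muln_gt0 d_pos. Qed.

Lemma stretch_sum (l : seq mon) :
  stretch (\big[+%MM/0%MM]_(x <- l) x) = \big[+%MM/0%MM]_(x <- l) stretch x.
Proof.
elim: l => [|x l IHl]; first by rewrite !big_nil; apply/mnmP => t; rewrite !mnmE muln0.
by rewrite !big_cons -IHl; apply/mnmP => t; rewrite !(mnmE, mnmDE) mulnDr.
Qed.

Lemma stretched_antichain M : antichain M -> antichain (stretched M).
Proof.
move=> antiM _ _ [a [Ma ->]] [b [Mb ->]]; rewrite lepm_stretch.
by move/(antiM _ _ Ma Mb) ->.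
Qed.

Lemma sum_of_stretched s M a : sum_of s (stretched M) a <-> stretched (sum_of s M) a.
Proof.
split=> [[l [<- Ml ->]] | [b [[l [<- Ml ->]] ->]]].
- have [l' [Ml' ->]] : exists l', {in l', forall x, M x} /\ l = map stretch l'.
    elim: l Ml => [|x l IHl] Ml; first by exists [::].
    have [y [My ->]] := Ml x (mem_head x l).
    have [l' [Ml' ->]] := IHl (fun z zl => Ml z (mem_behead (s := x :: l) zl)).
    by exists (y :: l'); split=> // z; rewrite inE => /predU1P [-> | /Ml'].
  exists (\big[+%MM/0%MM]_(x <- l') x); rewrite stretch_sum big_map size_map.
  by split=> //; exists l'.
- exists (map stretch l); rewrite size_map stretch_sum big_map; split=> //.
  by move=> _ /mapP [x xl ->]; exists x; split=> //; apply: Ml.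
Qed.

Definition stretch_vars : n.-tuple S := [tuple 'X_i ^+ d i | i < n].

Lemma stretch_varsX m : 'X_[m] \mPo stretch_vars = 'X_[stretch m].
Proof.
rewrite comp_mpolyX [RHS]mpolyXE_id; apply: eq_bigr => t _.
by rewrite tnth_mktuple -exprM mnmE mulnC.
Qed.

Lemma mcoeff_stretch f m : (f \mPo stretch_vars)@_(stretch m) = f@_m.
Proof.
rewrite [in RHS](mpolyE f) comp_mpolyEX !raddf_sum /=; apply: eq_bigr => x _.
by rewrite stretch_varsX !mcoeffZ !mcoeffX (inj_eq stretch_inj).
Qed.

Lemma msupp_stretch f m : m \in msupp f -> stretch m \in msupp (f \mPo stretch_vars).
Proof. by rewrite !mcoeff_msupp mcoeff_stretch. Qed.

Lemma var_ideal_stretch C u : var_ideal C (u \mPo stretch_vars) -> var_ideal (K:=K) C u.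
Proof.
rewrite !var_idealP => /allP Cu; apply/allP => m /msupp_stretch /Cu.
by rewrite meets_stretch.
Qed.

Lemma mon_ideal_stretch M f :
  mon_ideal (stretched M) (f \mPo stretch_vars) <-> mon_ideal M f.
Proof.
split=> [|Mf].
- move/mon_idealP => sMf; apply/mon_idealP => m /msupp_stretch /sMf.
  by case=> _ [b [Mb ->]]; rewrite lepm_stretch; exists b.
- pose J f := mon_ideal (stretched M) (f \mPo stretch_vars).
  suff: J f by [].
  apply: mon_ideal_min Mf => [|a Ma]; last first.
    by rewrite /J stretch_varsX; apply: mon_ideal_gen; exists a.
  have IsM := mon_ideal_is_ideal K (stretched M).
  split; [|split] => [|p q Jp Jq|p q Jq]; rewrite /J.
  + by rewrite raddf0; apply: (ideal0 IsM).
  + by rewrite raddfD; apply: (idealD IsM).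
  + by rewrite rmorphM; apply: (idealMl IsM).
Qed.

Lemma ideal_pow_stretch s M f :
  ideal_pow s (mon_ideal (stretched M)) (f \mPo stretch_vars) <->
  ideal_pow s (mon_ideal M) f.
Proof.
rewrite !ideal_pow_mon_ideal (eq_mon_ideal (sum_of_stretched s M)).
exact: mon_ideal_stretch.
Qed.

Lemma mingen_weighted J m :
  mingen (weighted d J) m <-> stretched (mingen J) m.
Proof. exact/mingen_mon_ideal/stretched_antichain/mingen_antichain. Qed.

Lemma vertex_cover_weighted J C : vertex_cover (weighted d J) C <-> vertex_cover J C.
Proof.
split=> coverC m.
- by move=> mgm; rewrite -meets_stretch; apply/coverC/mingen_weighted; exists m.
- by move=> /mingen_weighted [b [mgb ->]]; rewrite meets_stretch; apply: coverC.
Qed.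

Lemma min_vertex_cover_weighted J C :
  min_vertex_cover (weighted d J) C <-> min_vertex_cover J C.
Proof.
rewrite /min_vertex_cover vertex_cover_weighted.
by split=> -[coverC minC]; split=> // C' C'C /vertex_cover_weighted; apply: minC.
Qed.

Lemma weighted_simis J : is_monomial_ideal J -> simis (weighted d J) -> simis J.
Proof.
move=> monJ simW s s1 f; split=> [symf|]; last exact: ideal_pow_symbolic_power.
have Jpow := eq_ideal_pow s (monomial_ideal_mingen monJ).
apply/Jpow/(ideal_pow_stretch s)/(simW s s1) => P minP.
have [C [PC /min_vertex_cover_weighted minC]] :=
  min_prime_var_ideal (mon_ideal_monomial _ _) minP.
have [u [Cu Jpu]] := symf _ (min_vertex_cover_min_prime monJ minC).
exists (u \mPo stretch_vars); split; first by move/PC/var_ideal_stretch.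
by rewrite -rmorphM; apply/(ideal_pow_stretch s)/Jpow.
Qed.

End Weighting.

Section Support2Simis.
Variables (K : fieldType) (n : nat).
Local Notation S := {mpoly K[n]}.
Local Notation mon := 'X_{1..n}.
Implicit Types (m g h : mon) (C : {set 'I_n}).

Variable I : S -> Prop.
Hypotheses (I_support2 : support2 I) (I_simis : simis I)
  (I_decomp : minimal_irred_decomp I) (I_alpha : alpha_one I).

Lemma I_monomial : is_monomial_ideal I.
Proof. by case: I_support2. Qed.

Definition on_edge m (i j : 'I_n) := forall t, (0 < m t)%N = (t == i) || (t == j).

Lemma on_edge_sym m i j : on_edge m i j -> on_edge m j i.
Proof. by move=> mij t; rewrite orbC. Qed.

Lemma on_edge_pos m i j : on_edge m i j -> (0 < m i)%N /\ (0 < m j)%N.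
Proof. by move=> mij; rewrite !mij !eqxx orbT. Qed.

Lemma on_edge_zero m i j t : on_edge m i j -> t != i -> t != j -> m t = 0%N.
Proof.
by move=> mij ti tj; apply/eqP; rewrite -leqn0 leqNgt mij (negbTE ti) (negbTE tj).
Qed.

Lemma mingen_on_edge m : mingen I m -> exists i j, i != j /\ on_edge m i j.
Proof.
move=> mgm; have [i [j [ltij mi mj mij]]] := I_support2.2 m mgm.
exists i, j; split=> [|t]; first by rewrite neq_ltn ltij.
have [-> | ti] := eqVneq t i; first by rewrite mi.
have [-> | tj] := eqVneq t j; first by rewrite mj orbT.
by rewrite mij.
Qed.

Lemma mingen_partner m i : mingen I m -> (0 < m i)%N -> exists2 j, j != i & on_edge m i j.
Proof.
move=> mgm mi; have [i' [j' [i'j' mij']]] := mingen_on_edge mgm.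
move: mi; rewrite mij' => /orP[] /eqP ->; first by exists j'; rewrite 1?eq_sym.
by exists i'; [|apply: on_edge_sym].
Qed.

Lemma mingen_on_edge_of m i j : mingen I m -> i != j -> (0 < m i)%N -> (0 < m j)%N ->
  on_edge m i j.
Proof.
move=> mgm ij mi mj; have [j' j'i mij'] := mingen_partner mgm mi.
by move: mj; rewrite mij' eq_sym (negbTE ij) => /eqP ->.
Qed.

Lemma mingen_edge_uniq m m' i j : mingen I m -> mingen I m' ->
  on_edge m i j -> on_edge m' i j -> m = m'.
Proof. by move=> mgm mgm' mij m'ij; apply: I_alpha => // t; rewrite mij m'ij. Qed.

Lemma min_cover_component C : min_vertex_cover I C -> exists e : 'I_n -> nat,
  [/\ forall t, t \in C -> (1 <= e t)%N,
      forall m, mingen I m -> exists2 t, t \in C & (e t <= m t)%N &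
      forall t, t \in C -> exists v : mon,
        (forall s, s \in C -> v s = 0%N) /\ I 'X_[(v + U_(t) *+ e t)%MM]].
Proof.
move=> minC; have [k [A [e [e_pos decI _ distinct]]]] := I_decomp.
have [l AlC] := component_on_min_cover e_pos decI minC.
exists (e l); split.
- by move=> t; rewrite -AlC; apply: e_pos.
- by move=> m [/(decompX decI) /(_ l) [t tA le] _]; exists t; rewrite -?AlC.
- by move=> t tC; apply: (component_pure_powers e_pos decI distinct minC AlC tC).
Qed.

Section HalfGenerator.
Variables (i j k : 'I_n) (m m' : mon).
Hypotheses (mgm : mingen I m) (mgm' : mingen I m').
Hypotheses (ij : i != j) (ik : i != k) (jk : j != k).
Hypotheses (mij : on_edge m i j) (m'ik : on_edge m' i k) (lt_mi : (m i < m' i)%N).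
Local Notation w := (m + m' - U_(i))%MM.

Lemma wE t : w t = (m t + m' t - (i == t))%N.
Proof. by rewrite mnmBE mnmDE mnm1E. Qed.

Lemma w_coords : [/\ w i = (m i + m' i - 1)%N, w j = m j, w k = m' k &
  forall t, t != i -> t != j -> t != k -> w t = 0%N].
Proof.
have m'j : m' j = 0%N by apply: on_edge_zero m'ik _ jk; rewrite eq_sym.
have mk : m k = 0%N by apply: on_edge_zero mij _ _; rewrite eq_sym.
split; rewrite ?wE ?eqxx ?(negbTE ij) ?(negbTE ik) ?m'j ?mk ?addn0 ?subn0 //.
by move=> t ti tj tk; rewrite wE (on_edge_zero mij ti tj) (on_edge_zero m'ik ti tk).
Qed.

Lemma mingen_le_w g : mingen I g -> (g <= w)%MM ->
  [\/ g = m, g = m' | g i = 0%N /\ on_edge g j k].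
Proof.
move=> mgg /mnm_lepP gw; have [_ _ _ w0] := w_coords.
have g_supp t : (0 < g t)%N -> [|| t == i, t == j | t == k].
  apply: contraLR => /norP [ti /norP [tj tk]].
  by move: (gw t); rewrite w0 // leqn0 => /eqP ->.
have [gi0 | gi] := posnP (g i).
  apply: Or33; split=> //; have [x [y [xy gxy]]] := mingen_on_edge mgg.
  have [gx gy] := on_edge_pos gxy.
  have in_jk t : (0 < g t)%N -> (t == j) || (t == k).
    by move=> gt; move: (g_supp t gt); case: eqP gt => [-> | //]; rewrite gi0.
  move: (in_jk x gx) (in_jk y gy) => /orP[] /eqP ex /orP[] /eqP ey; subst x y;
    by [rewrite eqxx in xy | apply: mingen_on_edge_of].
have [x xi gix] := mingen_partner mgg gi; have [_ gx] := on_edge_pos gix.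
move: (g_supp x gx); rewrite (negbTE xi) /= => /orP[] /eqP ex; subst x.
- by apply: Or31; apply: mingen_edge_uniq mgg mgm gix mij.
- by apply: Or32; apply: mingen_edge_uniq mgg mgm' gix m'ik.
Qed.

Lemma square_w_half : ideal_pow 2 I 'X_[w] ->
  exists g, [/\ mingen I g, g i = 0%N & (g + g <= w)%MM].
Proof.
move/(eq_ideal_pow 2 (monomial_ideal_mingen I_monomial))/ideal_pow_mon_ideal/mon_idealX.
case=> _ [l [sl mgl ->]]; case: l sl mgl => [|g1 [|g2 []]] // _ mgl.
rewrite !big_cons big_nil addm0 => le_w.
have mg1 : mingen I g1 by apply: mgl; rewrite mem_head.
have mg2 : mingen I g2 by apply: mgl; rewrite !inE eqxx orbT.
have le1 := lepm_trans (lem_addr g1 g2) le_w; have le2 := lepm_trans (lem_addl g1 g2) le_w.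
have [wi wj wk _] := w_coords.
have [mi mj] := on_edge_pos mij; have [m'i m'k] := on_edge_pos m'ik.
move: (mnm_lepP le_w i) (mnm_lepP le_w j) (mnm_lepP le_w k); rewrite !mnmDE wi wj wk.
case: (mingen_le_w mg1 le1) => [->|->|[g1i /[dup] g1jk /on_edge_pos [g1j g1k]]];
case: (mingen_le_w mg2 le2) => [->|->|[g2i /[dup] g2jk /on_edge_pos [g2j g2k]]]; try lia.
move=> _ _ _; have g12 := mingen_edge_uniq mg1 mg2 g1jk g2jk; subst g2.
by exists g1.
Qed.

(* Locally at var_ideal C, w dominates the product of two generators of I or of two pure
   powers from the C-primary component. *)
Lemma loc_square_w C : min_vertex_cover I C ->
  loc_contr (ideal_pow 2 I) (var_ideal C) 'X_[w].
Proof.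
move=> minC; have [e [e_pos gen_e pure]] := min_cover_component minC.
have [wi wj wk w0] := w_coords; have [mi mj] := on_edge_pos mij.
have [m'i m'k] := on_edge_pos m'ik.
have pure2 t1 t2 : t1 \in C -> t2 \in C ->
    (forall s, s \in C -> (t1 == s) * e t1 + (t2 == s) * e t2 <= w s)%N ->
    loc_contr (ideal_pow 2 I) (var_ideal C) 'X_[w].
  move=> t1C t2C le; have [v1 [v1C Iv1]] := pure _ t1C; have [v2 [v2C Iv2]] := pure _ t2C.
  apply: (loc_contr_pow2X Iv1 Iv2) => s sC.
  by rewrite !mnmDE !mulmn1E v1C // v2C //; apply: le.
have [iC | iNC] := boolP (i \in C); last first.
  apply: (loc_contr_pow2X mgm.1 mgm'.1) => s sC.
  have si : i != s by apply: contraNneq iNC => ->.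
  by rewrite wE (negbTE si) subn0.
have [t tC et] := gen_e _ mgm; have := leq_trans (e_pos _ tC) et.
rewrite mij => /orP[] /eqP ti; subst t.
  apply: (pure2 i i) => // s sC; have [<- | si] := eqVneq i s; last by rewrite mul0n.
  by rewrite wi; lia.
have [t' t'C et'] := gen_e _ mgm'; have := leq_trans (e_pos _ t'C) et'.
rewrite m'ik => /orP[] /eqP t'i; subst t'.
  apply: (pure2 j i) => // s sC.
  have [<- | nj] := eqVneq j s; first by rewrite (negbTE ij) wj; lia.
  by have [<- | ni] := eqVneq i s; rewrite ?wi /=; lia.
apply: (pure2 j k) => // s sC.
have [<- | nj] := eqVneq j s; first by rewrite (eq_sym k j) (negbTE jk) wj; lia.
by have [<- | nk] := eqVneq k s; rewrite ?wk /=; lia.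
Qed.

Lemma symbolic_square_w : symbolic_power 2 I 'X_[w].
Proof.
move=> P minP; have [C [PC minC]] := min_prime_var_ideal I_monomial minP.
by have [u [Cu Iu]] := loc_square_w minC; exists u; split=> // /PC.
Qed.

Lemma half_generator : exists g, [/\ mingen I g, g i = 0%N & (g + g <= w)%MM].
Proof. exact/square_w_half/(I_simis (s := 2))/symbolic_square_w. Qed.

End HalfGenerator.

Lemma mingen_exponent_not_lt g g' i : mingen I g -> mingen I g' ->
  (0 < g i)%N -> (0 < g' i)%N -> ~ (g i < g' i)%N.
Proof.
move=> mgg mgg' gi g'i lt_gi.
have [j ji gij] := mingen_partner mgg gi; have [k ki g'ik] := mingen_partner mgg' g'i.
have jk : j != k.
  by apply: contraTneq lt_gi => jk; subst k; rewrite (mingen_edge_uniq mgg mgg' gij g'ik) ltnn.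
have ij : i != j by rewrite eq_sym.
have ik : i != k by rewrite eq_sym.
have [h [mgh hi hw]] := half_generator mgg mgg' ij ik jk gij g'ik lt_gi.
have [_ wj _ _] := w_coords ij ik jk gij g'ik.
have hle := lepm_trans (lem_addr h h) hw.
case: (mingen_le_w mgg mgg' ij ik jk gij g'ik mgh hle) => [hg | hg' | [_ hjk]].
- by move: gi; rewrite -hg hi.
- by move: g'i; rewrite -hg' hi.
have [hj _] := on_edge_pos hjk; have gji := on_edge_sym gij.
have lt_hj : (h j < g j)%N by have := mnm_lepP hw j; rewrite mnmDE wj; lia.
have [h' [mgh' h'j h'w]] := half_generator mgh mgg jk ji ki hjk gji lt_hj.
have [_ _ wi _] := w_coords jk ji ki hjk gji.
have h'le := lepm_trans (lem_addr h' h') h'w.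
case: (mingen_le_w mgh mgg jk ji ki hjk gji mgh' h'le) => [h'h | h'g | [_ h'ki]].
- by move: hj; rewrite -h'h h'j.
- by move: (on_edge_pos gji).1; rewrite -h'g h'j.
have h'g' := mingen_edge_uniq mgh' mgg' (on_edge_sym h'ki) g'ik; subst h'.
by have := mnm_lepP h'w i; rewrite mnmDE wi; lia.
Qed.

Lemma mingen_exponent_uniform g g' i : mingen I g -> mingen I g' ->
  (0 < g i)%N -> (0 < g' i)%N -> g i = g' i.
Proof.
move=> mgg mgg' gi g'i; case: (ltngtP (g i) (g' i)) => // lt_gi; exfalso.
- exact: mingen_exponent_not_lt mgg mgg' gi g'i lt_gi.
- exact: mingen_exponent_not_lt mgg' mgg g'i gi lt_gi.
Qed.

Definition weight t : nat :=
  if pselect (exists g, mingen I g /\ (0 < g t)%N) is left ex then sval (cid ex) t else 1%N.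

Lemma weight_pos t : (1 <= weight t)%N.
Proof. by rewrite /weight; case: pselect => // ex; have [_] := svalP (cid ex). Qed.

Lemma weightE g t : mingen I g -> (0 < g t)%N -> weight t = g t.
Proof.
move=> mgg gt; rewrite /weight; case: pselect => [ex | []]; last by exists g.
by have [mgg' g't] := svalP (cid ex); apply: mingen_exponent_uniform.
Qed.

Definition sqfree g : mon := [multinom (0 < g t)%N : nat | t < n].

Lemma stretch_sqfree g : mingen I g -> stretch weight (sqfree g) = g.
Proof.
move=> mgg; apply/mnmP => t; rewrite !mnmE.
by have [-> | gt] := posnP (g t); rewrite ?muln0 // muln1 (weightE mgg).
Qed.

Definition sqfree_gens b := exists g, mingen I g /\ b = sqfree g.

Lemma sqfree_gens_antichain : antichain sqfree_gens.
Proof.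
move=> a b [g [mgg ->]] [g' [mgg' ->]] /mnm_lepP le; congr sqfree.
have [x [y [xy gxy]]] := mingen_on_edge mgg; have [gx gy] := on_edge_pos gxy.
have pos_g' t : (0 < g t)%N -> (0 < g' t)%N.
  by move=> gt; move: (le t); rewrite !mnmE gt; case: (0 < g' t)%N.
exact: mingen_edge_uniq mgg mgg' gxy (mingen_on_edge_of mgg' xy (pos_g' _ gx) (pos_g' _ gy)).
Qed.

Definition sqfree_part : S -> Prop := mon_ideal sqfree_gens.

Lemma mingen_sqfree_part b : mingen sqfree_part b <-> sqfree_gens b.
Proof. exact/mingen_mon_ideal/sqfree_gens_antichain. Qed.

Lemma sqfree_part_squarefree : squarefree_monomial_ideal sqfree_part.
Proof.
split=> [|_ /mingen_sqfree_part [g [_ ->]] t]; first exact: mon_ideal_monomial.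
by rewrite mnmE; case: (0 < g t)%N.
Qed.

Lemma I_weighted : same_ideal I (weighted weight sqfree_part).
Proof.
move=> f; rewrite (monomial_ideal_mingen I_monomial) weightedE.
apply: eq_mon_ideal => a; split=> [mga | [_ [/mingen_sqfree_part [g [mgg ->]] ->]]].
  exists (sqfree a); rewrite stretch_sqfree //.
  by split=> //; apply/mingen_sqfree_part; exists a.
by rewrite stretch_sqfree.
Qed.

Lemma sqfree_part_simis : simis sqfree_part.
Proof.
apply: (weighted_simis weight_pos (mon_ideal_monomial _ _)).
exact: eq_simis I_weighted I_simis.
Qed.

End Support2Simis.

Theorem lemma2p1 (K : fieldType) (n : nat) (I : {mpoly K[n]} -> Prop) :
  support2 I -> simis I -> minimal_irred_decomp I -> alpha_one I ->
  exists (J : {mpoly K[n]} -> Prop) (d : 'I_n -> nat),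
    [/\ squarefree_monomial_ideal J, simis J,
        (forall i, (1 <= d i)%N) &
        same_ideal I (weighted d J)].
Proof.
move=> support2I simisI decI alphaI.
exists (sqfree_part I), (weight I); split.
- exact: sqfree_part_squarefree.
- exact: sqfree_part_simis.
- exact: weight_pos.
- exact: I_weighted.
Qed.
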